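(* Let $\mathcal{X}$ be a finite set, let $P_X$ be a pmf on $\mathcal{X}$ with $P_X(x)>0$ for all $x$, and let $R_X\neq P_X$ be a pmf on $\mathcal{X}$. Write $J_X=R_X-P_X$ and $K_X(x)=J_X(x)/\sqrt{P_X(x)}$, so that $R_X=P_X+J_X=P_X+\mathrm{diag}(\sqrt{P_X})K_X$. Then $$\frac{D(R_X\|P_X)}{\|K_X\|_2^2\,\|J_X\|_1}\ge \frac{\phi\!\left(\max_{A\subseteq\mathcal{X}}\min\{P_X(A),1-P_X(A)\}\right)}{4\max_{x\in\mathcal{X}}\left|\frac{J_X(x)}{P_X(x)}\right|},$$ where $\phi:[0,\tfrac12]\to\mathbb{R}$ is $\phi(p)=\frac{1}{1-2p}\log\frac{1-p}{p}$ for $p\in[0,\tfrac12)$ and $\phi(\tfrac12)=2$.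
   Context: $D(R_X\|P_X)=\sum_x R_X(x)\log(R_X(x)/P_X(x))$ is the KL divergence (natural log). $P_X(A)=\sum_{x\in A}P_X(x)$. $\|\cdot\|_p$ denotes the $\ell^p$-norm. *)

From HB Require Import structures.
From mathcomp Require Import all_boot all_order all_algebra.
From mathcomp Require Import reals exp.
Set Implicit Arguments. Unset Strict Implicit. Unset Printing Implicit Defensive.
Import Order.TTheory GRing.Theory Num.Theory.
Local Open Scope ring_scope.

Section Defs.
Variables (R : realType) (T : finType).

Definition is_pmf (p : T -> R) : Prop :=
  (forall x, 0 <= p x) /\ \sum_(x : T) p x = 1.

Definition probA (p : T -> R) (A : {set T}) : R := \sum_(x in A) p x.

Definition KL (r p : T -> R) : R :=
  \sum_(x : T) (if r x == 0 then 0 else r x * ln (r x / p x)).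

Definition phi (q : R) : R :=
  if q == 2^-1 then 2 else (1 - 2 * q)^-1 * ln ((1 - q) / q).

Definition Jfun (r p : T -> R) (x : T) : R := r x - p x.
Definition Kfun (r p : T -> R) (x : T) : R := Jfun r p x / Num.sqrt (p x).

Definition norm1 (f : T -> R) : R := \sum_(x : T) `|f x|.
Definition norm2sq (f : T -> R) : R := \sum_(x : T) f x ^+ 2.

(* max over subsets A of min(P(A), 1 - P(A)); all values are >= 0 *)
Definition balance (p : T -> R) : R :=
  \big[Num.max/0]_(A : {set T}) Num.min (probA p A) (1 - probA p A).

(* max_x |J(x)/P(x)|; all values are >= 0 *)
Definition maxratio (r p : T -> R) : R :=
  \big[Num.max/0]_(x : T) `|Jfun r p x / p x|.
End Defs.

From HB Require Import structures.
From mathcomp Require Import all_boot all_order all_algebra.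
From mathcomp Require Import reals exp.
From mathcomp Require Import boolp normedtype derive realfun.
From mathcomp Require Import ring lra.
Set Implicit Arguments. Unset Strict Implicit. Unset Printing Implicit Defensive.
Import Order.TTheory GRing.Theory Num.Theory numFieldNormedType.Exports.
Local Open Scope ring_scope.

(* Let A be the set where R_X exceeds P_X, p = P_X(A) and q = R_X(A); then
   ||J_X||_1 = 2 (q - p) and, by the log-sum inequality, D(R_X||P_X) >= d(q||p),
   the binary divergence.  For p <= 1/2 and c = phi p, the gap
   d(q||p) - c (q - p)^2 is symmetric under q |-> 1 - q, and its derivative
   logit q - logit p - 2 c (q - p) is concave on (0, 1/2] and vanishes at p
   and, phi p being half the slope of the chord of logit from p to 1/2, also
   at 1/2; so on [0, 1/2] the gap is minimal, and zero, at p.  Hence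
   d(q||p) >= phi (min p (1 - p)) (q - p)^2.  Finally phi decreases on
   (0, 1/2], min p (1 - p) <= balance P_X, and
   ||K_X||_2^2 = sum |J_X/P_X| |J_X| <= max |J_X/P_X| ||J_X||_1. *)

Section Calculus.
Variable R : realType.
Implicit Types a b c p q x y : R.

Section OpenInterval.
Variables (f df : R -> R) (l u : R).
Hypothesis f_derive : forall x, l < x < u -> is_derive x 1 f (df x).

Lemma mvt_in a b : l < a -> a < b -> b < u ->
  exists2 c, a < c < b & f b - f a = df c * (b - a).
Proof.
move=> la ab bu; have [||c cab ->] := @MVT _ f df a b ab; last by exists c.
- by move=> x; rewrite in_itv /= => /andP[ax xb]; apply: f_derive; lra.
- apply: derivable_within_continuous => x; rewrite in_itv /= => /andP[ax xb].
  by apply: ex_derive; apply: f_derive; lra.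
Qed.

Lemma concave_chord a b c : l < a -> a < b -> b < c -> c < u ->
  (forall x y, a <= x -> x <= y -> y <= c -> df y <= df x) ->
  (f c - f b) * (b - a) <= (f b - f a) * (c - b).
Proof.
move=> la ab bc cu df_nonincr.
have [y /andP[ay yb] ->] := mvt_in la ab (lt_trans bc cu).
have [z /andP[bz zc] ->] := mvt_in (lt_trans la ab) bc cu.
have dfzy : df z <= df y by apply: df_nonincr; lra.
rewrite mulrAC; apply: ler_wpM2r; first by rewrite subr_ge0 ltW.
by rewrite ler_wpM2r // subr_ge0 ltW.
Qed.

End OpenInterval.

Lemma is_derive_ln1m x : x < 1 ->
  is_derive x 1 (fun y => ln (1 - y)) (- (1 - x)^-1).
Proof.
move=> x1.
have dln : is_derive (1 - x) 1 (@ln R) (1 - x)^-1 by apply: is_derive1_ln; lra.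
have d1m : is_derive x 1 (fun y : R => 1 - y) (-1).
  by apply: is_derive_eq; rewrite add0r mul1r.
apply: (is_derive_eq (@is_derive1_comp _ (@ln R) (fun y => 1 - y) _ _ _ dln d1m)).
by rewrite mulrN1.
Qed.

Definition logit x := ln x - ln (1 - x).
Definition logit_deriv x := x^-1 + (1 - x)^-1.

Lemma is_derive_logit x : 0 < x < 1 -> is_derive x 1 logit (logit_deriv x).
Proof.
move=> /andP[x0 x1].
have dln := is_derive1_ln x0; have dln1m := is_derive_ln1m x1.
by apply: is_derive_eq; rewrite /logit_deriv opprK.
Qed.

Lemma logit_half : logit 2^-1 = 0.
Proof. by rewrite /logit (_ : 1 - 2^-1 = 2^-1) ?subrr //; field. Qed.

Lemma logit_deriv_half : logit_deriv 2^-1 = 4.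
Proof. by rewrite /logit_deriv (_ : 1 - 2^-1 = 2^-1); field. Qed.

Lemma logit_deriv_nonincr x y : 0 < x -> x <= y -> y <= 2^-1 ->
  logit_deriv y <= logit_deriv x.
Proof.
move=> x0 xy y2.
have E z : 0 < z < 1 -> logit_deriv z = (z * (1 - z))^-1.
  by move=> /andP[z0 z1]; rewrite /logit_deriv; field; rewrite !gt_eqF ?subr_gt0.
by rewrite !E ?lef_pV2 ?posrE; nra.
Qed.

Lemma phi_half : phi 2^-1 = 2 :> R.
Proof. by rewrite /phi eqxx. Qed.

Lemma phi_logit a : 0 < a -> a <= 2^-1 -> phi a * (1 - 2 * a) = - logit a.
Proof.
move=> a0 a2; case: (eqVneq a 2^-1) => [->|a_neq].
  by rewrite logit_half phi_half (_ : 1 - 2 * 2^-1 = 0 :> R) ?oppr0 ?mulr0 //; field.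
rewrite /phi (negbTE a_neq) ln_div ?posrE; try lra.
rewrite /logit mulrAC mulVf ?mul1r ?opprB //.
by apply: contra a_neq; rewrite subr_eq0 => /eqP ?; apply/eqP; lra.
Qed.

Lemma phi_chord_slope a : 0 < a -> a < 2^-1 ->
  exists2 y, a < y < 2^-1 & 2 * phi a = logit_deriv y.
Proof.
move=> a0 a2.
have [y /andP[ay y2] chord] := mvt_in is_derive_logit a0 a2 ltac:(lra).
exists y; first by rewrite ay.
have a2_neq0 : 2^-1 - a != 0 by rewrite subr_eq0 gt_eqF.
apply: (mulIf a2_neq0); rewrite -chord logit_half sub0r -(phi_logit a0 (ltW a2)).
by field.
Qed.

Lemma phi_ge2 a : 0 < a -> a <= 2^-1 -> 2 <= phi a.
Proof.
move=> a0; rewrite le_eqVlt => /predU1P[->|a2]; first by rewrite phi_half.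
have [y /andP[ay y2] slope_eq] := phi_chord_slope a0 a2.
have : 4 <= logit_deriv y.
  by rewrite -logit_deriv_half; apply: logit_deriv_nonincr; lra.
lra.
Qed.

Lemma phi_le_logit_deriv a : 0 < a -> a <= 2^-1 -> 2 * phi a <= logit_deriv a.
Proof.
move=> a0; rewrite le_eqVlt => /predU1P[->|a2].
  by rewrite phi_half logit_deriv_half; lra.
have [y /andP[ay y2] ->] := phi_chord_slope a0 a2.
by rewrite logit_deriv_nonincr ?ltW.
Qed.

Lemma phi_nonincr a b : 0 < a -> a <= b -> b <= 2^-1 -> phi b <= phi a.
Proof.
move=> a0; rewrite le_eqVlt => /predU1P[->//|ab].
rewrite le_eqVlt => /predU1P[b_half|b2].
  by rewrite b_half phi_half phi_ge2 // -b_half ltW.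
have := concave_chord is_derive_logit a0 ab b2 ltac:(lra)
  (fun x y ax => logit_deriv_nonincr (lt_le_trans a0 ax)).
rewrite logit_half sub0r => chord.
have ea := phi_logit a0 (ltW (lt_trans ab b2)).
have eb := phi_logit (lt_trans a0 ab) (ltW b2).
have pos : 0 < (2^-1 - a) * (2^-1 - b) by apply: mulr_gt0; lra.
rewrite -subr_ge0 -(pmulr_lge0 _ pos); nra.
Qed.

Definition pinsker_gap p c q :=
  q * ln q + (1 - q) * ln (1 - q) - q * ln p - (1 - q) * ln (1 - p)
  - c * (q - p) ^+ 2.

Lemma is_derive_pinsker_gap p c q : 0 < q < 1 ->
  is_derive q 1 (pinsker_gap p c) (logit q - logit p - 2 * c * (q - p)).
Proof.
move=> /andP[q0 q1].
have dln := is_derive1_ln q0; have dln1m := is_derive_ln1m q1.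
apply: is_derive_eq; rewrite /GRing.scale /= /logit.
by field; rewrite !gt_eqF ?subr_gt0.
Qed.

Lemma ge0_of_small_perturbations x c d : 0 < d -> 0 <= c ->
  (forall e, 0 < e -> e <= d -> 0 <= x + e * c) -> 0 <= x.
Proof.
move=> d0 c0 shift; apply/ler_addgt0Pr => eps eps0.
set e := Num.min d (eps / (c + 1)).
have e0 : 0 < e by rewrite lt_min d0 divr_gt0 //; lra.
have e_le_d : e <= d by rewrite /e ge_min lexx.
have e_le : e <= eps / (c + 1) by rewrite /e ge_min lexx orbT.
have epsE : eps / (c + 1) * (c + 1) = eps by rewrite divfK // gt_eqF //; lra.
have : 0 < eps / (c + 1) by rewrite divr_gt0 //; lra.
have := shift e e0 e_le_d; nra.
Qed.

Section PinskerGap.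
Variable p : R.

Let dgap q := logit q - logit p - 2 * phi p * (q - p).

Let is_derive_dgap q : 0 < q < 1 ->
  is_derive q 1 dgap (logit_deriv q - 2 * phi p).
Proof.
move=> q01; have dlogit := is_derive_logit q01.
by apply: is_derive_eq; rewrite /GRing.scale /=; ring.
Qed.

Let dgap_p : dgap p = 0.
Proof. by rewrite /dgap; ring. Qed.

Let dgap_half : 0 < p -> p <= 2^-1 -> dgap 2^-1 = 0.
Proof. by move=> p0 p2; rewrite /dgap logit_half -(phi_logit p0 p2); field. Qed.

Let dgap_le0 t : 0 < t -> t <= p -> p <= 2^-1 -> dgap t <= 0.
Proof.
move=> t0; rewrite le_eqVlt => /predU1P[->|tp] p2; first by rewrite dgap_p.
have [y /andP[ty yp] e] := mvt_in is_derive_dgap t0 tp ltac:(lra).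
have : 2 * phi p <= logit_deriv y.
  apply: le_trans (phi_le_logit_deriv (lt_trans t0 tp) p2) _.
  by apply: logit_deriv_nonincr; lra.
rewrite dgap_p in e; nra.
Qed.

Let dgap_ge0 t : 0 < p -> p <= t -> t <= 2^-1 -> 0 <= dgap t.
Proof.
move=> p0; rewrite le_eqVlt => /predU1P[<-|pt]; first by rewrite dgap_p.
rewrite le_eqVlt => /predU1P[t_half|t2].
  by rewrite t_half dgap_half // -t_half ltW.
have ddgap_nonincr x y : p <= x -> x <= y -> y <= 2^-1 ->
    logit_deriv y - 2 * phi p <= logit_deriv x - 2 * phi p.
  by move=> px xy y2; rewrite lerD2r logit_deriv_nonincr // (lt_le_trans p0 px).
have := concave_chord is_derive_dgap p0 pt t2 ltac:(lra) ddgap_nonincr.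
rewrite dgap_p dgap_half //; try lra; nra.
Qed.

Let pinsker_gap_p c : pinsker_gap p c p = 0.
Proof. by rewrite /pinsker_gap; ring. Qed.

Let pinsker_gap_ge0_open q : 0 < p -> p <= 2^-1 -> 0 < q -> q <= 2^-1 ->
  0 <= pinsker_gap p (phi p) q.
Proof.
move=> p0 p2 q0 q2.
have dgape := is_derive_pinsker_gap p (phi p).
case: (ltgtP q p) => [qp|pq|->]; last by rewrite pinsker_gap_p.
- have [y /andP[qy yp]] := mvt_in dgape q0 qp ltac:(lra).
  rewrite pinsker_gap_p => e.
  have := dgap_le0 (lt_trans q0 qy) (ltW yp) p2; rewrite /dgap; nra.
- have [y /andP[py yq]] := mvt_in dgape p0 pq ltac:(lra).
  rewrite pinsker_gap_p => e.
  have := dgap_ge0 p0 (ltW py) (ltW (lt_le_trans yq q2)); rewrite /dgap; nra.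
Qed.

Let ln1mp_phi : 0 < p -> p <= 2^-1 -> ln (1 - p) = phi p * (1 - 2 * p) + ln p.
Proof. by move=> p0 p2; rewrite phi_logit // /logit; ring. Qed.

Let pinsker_gap_sym q : 0 < p -> p <= 2^-1 ->
  pinsker_gap p (phi p) (1 - q) = pinsker_gap p (phi p) q.
Proof.
move=> p0 p2; rewrite /pinsker_gap (_ : 1 - (1 - q) = q); last by ring.
by rewrite ln1mp_phi //; ring.
Qed.

Let pinsker_gap_ge0_at0 : 0 < p -> p <= 2^-1 -> 0 <= pinsker_gap p (phi p) 0.
Proof.
move=> p0 p2.
(* q ln q is not differentiable at 0: reach the endpoint from
   gap(e) <= gap(0) + e phi p for small e > 0. *)
apply: (ge0_of_small_perturbations p0 (le_trans _ (phi_ge2 p0 p2))) => // e e0 ep.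
have gapE : pinsker_gap p (phi p) e = pinsker_gap p (phi p) 0 + e * phi p
    + (e * ln e + (1 - e) * ln (1 - e) - phi p * e ^+ 2).
  by rewrite /pinsker_gap subr0 ln1 ln1mp_phi //; ring.
have := pinsker_gap_ge0_open p0 p2 e0 (le_trans ep p2).
have : e * ln e <= 0 by apply: mulr_ge0_le0; [lra | apply: ln_le0; lra].
have : (1 - e) * ln (1 - e) <= 0 by apply: mulr_ge0_le0; [lra | apply: ln_le0; lra].
have : 0 <= phi p * e ^+ 2 by rewrite mulr_ge0 ?sqr_ge0 // (le_trans _ (phi_ge2 p0 p2)).
lra.
Qed.

Lemma pinsker_gap_ge0 q : 0 < p -> p <= 2^-1 -> 0 <= q -> q <= 1 ->
  0 <= pinsker_gap p (phi p) q.
Proof.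
move=> p0 p2 q0 q1.
have gap_ge0_half r : 0 <= r -> r <= 2^-1 -> 0 <= pinsker_gap p (phi p) r.
  rewrite le_eqVlt => /predU1P[<- _|r0]; first exact: pinsker_gap_ge0_at0.
  exact: pinsker_gap_ge0_open.
case: (lerP q 2^-1) => [q2|q2]; first exact: gap_ge0_half.
by rewrite -pinsker_gap_sym //; apply: gap_ge0_half; lra.
Qed.

End PinskerGap.

Definition binKL p q := q * ln (q / p) + (1 - q) * ln ((1 - q) / (1 - p)).

Lemma mul_ln_div a b : 0 <= a -> 0 < b -> a * ln (a / b) = a * ln a - a * ln b.
Proof.
rewrite le_eqVlt => /predU1P[<-|a0] b0; first by rewrite !mul0r subrr.
by rewrite ln_div ?posrE // mulrBr.
Qed.

Lemma binKLE p c q : 0 < p -> p < 1 -> 0 <= q -> q <= 1 ->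
  binKL p q = pinsker_gap p c q + c * (q - p) ^+ 2.
Proof.
move=> p0 p1 q0 q1.
by rewrite /binKL !mul_ln_div /pinsker_gap; try lra; ring.
Qed.

Lemma binKL_ge_phi p q : 0 < p -> p < 1 -> 0 <= q -> q <= 1 ->
  phi (Num.min p (1 - p)) * (q - p) ^+ 2 <= binKL p q.
Proof.
wlog p2 : p q / p <= 2^-1 => [hwlog p0 p1 q0 q1|p0 p1 q0 q1].
  case: (lerP p 2^-1) => [|p2]; first by move/hwlog; apply.
  have -> : binKL p q = binKL (1 - p) (1 - q).
    by rewrite /binKL !subKr addrC.
  rewrite (_ : (q - p) ^+ 2 = ((1 - q) - (1 - p)) ^+ 2); last by ring.
  by rewrite minC -{2}(subKr 1 p); apply: hwlog; lra.
rewrite min_l; last by lra.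
by rewrite (binKLE (phi p)) // lerDr pinsker_gap_ge0.
Qed.

End Calculus.

Section FiniteDistributions.
Variables (R : realType) (T : finType).
Implicit Types (r p : T -> R) (A : {set T}).

Lemma log_sum_term (a b k : R) : 0 <= a -> 0 < b -> 0 < k ->
  a * ln k + a - b * k <= a * ln (a / b).
Proof.
rewrite le_eqVlt => /predU1P[<-|a0] b0 k0; first by rewrite !mul0r; nra.
have t0 : 0 < b * k / a by rewrite divr_gt0 ?mulr_gt0.
have ln_le : ln (b * k / a) <= b * k / a - 1.
  by have := @le_ln1Dx R (b * k / a - 1); rewrite (addrC 1) subrK; apply; lra.
have -> : ln k = ln (a / b) + ln (b * k / a).
  have kE : a / b * (b * k / a) = k by field; rewrite !gt_eqF.
  by rewrite -lnM ?posrE ?divr_gt0 ?mulr_gt0 // kE.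
have bkE : b * k = a * (b * k / a) by field; rewrite gt_eqF.
set t := b * k / a in ln_le bkE *; rewrite bkE; nra.
Qed.

Lemma log_sum (P : pred T) r p : (forall x, 0 <= r x) -> (forall x, 0 < p x) ->
  (\sum_(x | P x) r x) * ln ((\sum_(x | P x) r x) / \sum_(x | P x) p x)
  <= \sum_(x | P x) r x * ln (r x / p x).
Proof.
move=> r_ge0 p_gt0.
have [rS0|rS_neq0] := eqVneq (\sum_(x | P x) r x) 0.
  rewrite rS0 mul0r big1 // => x Px.
  by rewrite (psumr_eq0P (fun x _ => r_ge0 x) rS0 Px) mul0r.
have [x0 Px0] : exists x, P x.
  case: (pickP P) => [x Px|noP]; first by exists x.
  by move: rS_neq0; rewrite big_pred0 ?eqxx.
set rS := \sum_(x | P x) r x in rS_neq0 *; set pS := \sum_(x | P x) p x.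
have rS_gt0 : 0 < rS by rewrite lt_def rS_neq0 sumr_ge0.
have pS_gt0 : 0 < pS.
  rewrite /pS (bigD1 x0) //= ltr_wpDr ?p_gt0 //.
  by apply: sumr_ge0 => x _; apply: ltW.
have term x : P x ->
    r x * ln (rS / pS) + r x - p x * (rS / pS) <= r x * ln (r x / p x).
  by move=> _; apply: log_sum_term; rewrite ?divr_gt0.
apply: le_trans (ler_sum _ term).
rewrite sumrB big_split /= -!mulr_suml -/rS -/pS mulrCA divff ?gt_eqF //.
by rewrite mulr1 addrK.
Qed.

Lemma ler_term_sumr (F : T -> R) x : (forall y, 0 <= F y) -> F x <= \sum_y F y.
Proof. by move=> F_ge0; rewrite (bigD1 x) //= lerDl sumr_ge0. Qed.

Lemma probAC r A : is_pmf r -> probA r (~: A) = 1 - probA r A.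
Proof.
case=> _ r1; rewrite -r1 /probA [in RHS](bigID (mem A)) /= addrC addrK.
by apply: eq_bigl => x; rewrite inE.
Qed.

Lemma probA_ge0 r A : is_pmf r -> 0 <= probA r A.
Proof. by case=> r_ge0 _; apply: sumr_ge0. Qed.

Lemma probA_le1 r A : is_pmf r -> probA r A <= 1.
Proof. by move=> hr; have := probA_ge0 (~: A) hr; rewrite probAC //; lra. Qed.

Lemma probA_gt0 p A x : (forall y, 0 < p y) -> x \in A -> 0 < probA p A.
Proof.
move=> p_gt0 xA; rewrite /probA (bigD1 x) //= ltr_wpDr ?p_gt0 //.
by apply: sumr_ge0 => y _; apply: ltW.
Qed.

Lemma KL_ge_binKL r p A : is_pmf r -> is_pmf p -> (forall x, 0 < p x) ->
  binKL (probA p A) (probA r A) <= KL r p.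
Proof.
move=> hr hp p_gt0.
have -> : KL r p = \sum_x r x * ln (r x / p x).
  by apply: eq_bigr => x _; case: eqP => // ->; rewrite mul0r.
rewrite (bigID (mem A)) /= /binKL -!probAC // /probA.
apply: lerD; first exact: log_sum hr.1 p_gt0.
rewrite (eq_bigl (mem (~: A))) => [|x]; last by rewrite /= !inE.
exact: log_sum hr.1 p_gt0.
Qed.

Definition excess_set r p := [set x | p x < r x].

Lemma norm1_Jfun r p : is_pmf r -> is_pmf p ->
  norm1 (Jfun r p) = 2 * (probA r (excess_set r p) - probA p (excess_set r p)).
Proof.
move=> hr hp; set A := excess_set r p.
have JA : \sum_(x in A) `|Jfun r p x| = probA r A - probA p A.
  rewrite /probA -sumrB; apply: eq_bigr => x; rewrite inE => /ltW rp.
  by rewrite ger0_norm ?subr_ge0.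
have JAC : \sum_(x in ~: A) `|Jfun r p x| = probA p (~: A) - probA r (~: A).
  rewrite /probA -sumrB; apply: eq_bigr => x; rewrite !inE -leNgt => rp.
  by rewrite ler0_norm ?opprB // subr_le0.
rewrite /norm1 (bigID (mem A)) /= JA (eq_bigl (mem (~: A))) => [|x]; last first.
  by rewrite /= !inE.
by rewrite JAC !probAC //; ring.
Qed.

Lemma exists_Jfun_neq0 r p : r <> p -> exists x, Jfun r p x != 0.
Proof.
move=> r_neq_p; apply/existsP; apply: contra_notT r_neq_p => /existsPn J0.
by apply: funext => x; apply/eqP; rewrite -subr_eq0; exact/negPn/J0.
Qed.

Lemma norm1_Jfun_gt0 r p x : Jfun r p x != 0 -> 0 < norm1 (Jfun r p).
Proof.
move=> Jx; apply: lt_le_trans (ler_term_sumr x (fun y => normr_ge0 _)).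
by rewrite normr_gt0.
Qed.

Lemma probA_excess_set r p : is_pmf r -> is_pmf p -> (forall x, 0 < p x) ->
  r <> p -> 0 < probA p (excess_set r p) < 1.
Proof.
move=> hr hp p_gt0 r_neq_p; set A := excess_set r p.
have [x0 /norm1_Jfun_gt0] := exists_Jfun_neq0 r_neq_p.
rewrite norm1_Jfun // -/A => excess_gt0.
have probA0 (q : T -> R) : probA q set0 = 0 by rewrite /probA big_set0.
apply/andP; split.
  have [A0|[x xA]] := set_0Vmem A; last exact: probA_gt0 p_gt0 xA.
  by move: excess_gt0; rewrite A0 !probA0; lra.
have [AC0|[x xAC]] := set_0Vmem (~: A).
  have := congr1 (probA r) AC0; have := congr1 (probA p) AC0.
  by rewrite !probAC // !probA0; lra.
by have := probA_gt0 p_gt0 xAC; rewrite probAC //; lra.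
Qed.

Lemma le_maxratio r p x : `|Jfun r p x / p x| <= maxratio r p.
Proof. exact: le_bigmax. Qed.

Lemma maxratio_gt0 r p x : 0 < p x -> Jfun r p x != 0 -> 0 < maxratio r p.
Proof.
move=> px0 Jx; apply: lt_le_trans (le_maxratio r p x).
by rewrite normr_gt0 mulf_neq0 // invr_eq0 gt_eqF.
Qed.

Lemma Kfun_sqr r p x : 0 < p x ->
  Kfun r p x ^+ 2 = `|Jfun r p x / p x| * `|Jfun r p x|.
Proof.
move=> px0; rewrite /Kfun expr_div_n sqr_sqrtr ?ltW //.
rewrite -normrM [in RHS]mulrAC -[in RHS]expr2.
by rewrite ger0_norm // divr_ge0 ?sqr_ge0 ?ltW.
Qed.

Lemma norm2sq_Kfun_le r p : (forall x, 0 < p x) ->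
  norm2sq (Kfun r p) <= maxratio r p * norm1 (Jfun r p).
Proof.
move=> p_gt0; rewrite /norm2sq /norm1 mulr_sumr; apply: ler_sum => x _.
by rewrite Kfun_sqr // ler_wpM2r ?le_maxratio.
Qed.

Lemma norm2sq_Kfun_gt0 r p x : (forall y, 0 < p y) -> Jfun r p x != 0 ->
  0 < norm2sq (Kfun r p).
Proof.
move=> p_gt0 Jx; apply: lt_le_trans (ler_term_sumr x (fun y => sqr_ge0 _)).
by rewrite Kfun_sqr // mulr_gt0 ?normr_gt0 ?mulf_neq0 // invr_eq0 gt_eqF.
Qed.

Lemma balance_le_half p : balance p <= 2^-1.
Proof.
apply: bigmax_le => [|A _]; first lra.
by rewrite ge_min; case: (lerP (probA p A) (1 - probA p A)) => ?; apply/orP; lra.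
Qed.

Lemma min_probA_le_balance p A :
  Num.min (probA p A) (1 - probA p A) <= balance p.
Proof. exact: le_bigmax. Qed.

Lemma phi_balance_ge2 r p : is_pmf r -> is_pmf p -> (forall x, 0 < p x) ->
  r <> p -> 2 <= phi (balance p).
Proof.
move=> hr hp p_gt0 r_neq_p.
have /andP[pA_gt0 pA_lt1] := probA_excess_set hr hp p_gt0 r_neq_p.
have min_gt0 : 0 < Num.min (probA p (excess_set r p)) (1 - probA p (excess_set r p)).
  by rewrite lt_min pA_gt0 subr_gt0.
exact: phi_ge2 (lt_le_trans min_gt0 (min_probA_le_balance _ _)) (balance_le_half _).
Qed.

Lemma phi_balance_le_KL r p : is_pmf r -> is_pmf p -> (forall x, 0 < p x) ->
  r <> p -> phi (balance p) * norm1 (Jfun r p) ^+ 2 <= 4 * KL r p.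
Proof.
move=> hr hp p_gt0 r_neq_p; rewrite norm1_Jfun //.
set A := excess_set r p; set pA := probA p A; set rA := probA r A.
have /andP[pA_gt0 pA_lt1] : 0 < pA < 1 := probA_excess_set hr hp p_gt0 r_neq_p.
have min_gt0 : 0 < Num.min pA (1 - pA) by rewrite lt_min pA_gt0 subr_gt0.
have phi_le : phi (balance p) <= phi (Num.min pA (1 - pA)).
  exact: phi_nonincr min_gt0 (min_probA_le_balance _ _) (balance_le_half _).
have := binKL_ge_phi pA_gt0 pA_lt1 (probA_ge0 A hr) (probA_le1 A hr).
have := KL_ge_binKL A hr hp p_gt0.
have := ler_wpM2r (sqr_ge0 (rA - pA)) phi_le.
by rewrite -/pA -/rA exprMn; lra.
Qed.

End FiniteDistributions.

Theorem lemma2 (R : realType) (T : finType) (Px Rx : T -> R)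
  (hP : is_pmf Px) (hPpos : forall x, 0 < Px x)
  (hR : is_pmf Rx) (hne : Rx <> Px) :
  phi (balance Px) / (4 * maxratio Rx Px)
    <= KL Rx Px / (norm2sq (Kfun Rx Px) * norm1 (Jfun Rx Px)).
Proof.
have [x0 Jx0] := exists_Jfun_neq0 hne.
have M_gt0 := maxratio_gt0 (hPpos x0) Jx0.
have N1_gt0 := norm1_Jfun_gt0 Jx0.
have N2_gt0 := norm2sq_Kfun_gt0 hPpos Jx0.
have phi_ge0 : 0 <= phi (balance Px) / (4 * maxratio Rx Px).
  have := phi_balance_ge2 hR hP hPpos hne.
  by move=> phi_ge2; rewrite divr_ge0 ?mulr_ge0 ?(le_trans _ phi_ge2) // ltW.
rewrite ler_pdivlMr ?mulr_gt0 //.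
apply: (@le_trans _ _ (phi (balance Px) / (4 * maxratio Rx Px)
    * (maxratio Rx Px * norm1 (Jfun Rx Px) * norm1 (Jfun Rx Px)))).
  by apply: ler_wpM2l => //; apply: ler_wpM2r; [exact: ltW | exact: norm2sq_Kfun_le].
have -> : phi (balance Px) / (4 * maxratio Rx Px)
    * (maxratio Rx Px * norm1 (Jfun Rx Px) * norm1 (Jfun Rx Px))
    = phi (balance Px) * norm1 (Jfun Rx Px) ^+ 2 / 4.
  by field; rewrite gt_eqF.
by rewrite ler_pdivrMr // [leRHS]mulrC phi_balance_le_KL.
Qed.
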